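(* Suppose that for each $j=0,\dots,n$ the kernel $K_j$ belongs to $\mathrm{C}^2(0,2\pi)$ with $K_j''<0$ on $(0,2\pi)$. Let $S=S_\sigma$ be a simplex and let $\mathbf{y}\in S$ be such that $z_j(\mathbf{y})$ lies in the interior of $I_j(\mathbf{y})$ for each $j=0,\dots,n$. Then the Jacobian matrix of the map \[\Delta_\sigma(\mathbf{y})=\big(m_{\sigma(1)}(\mathbf{y})-m_{\sigma(0)}(\mathbf{y}),\dots,m_{\sigma(n)}(\mathbf{y})-m_{\sigma(n-1)}(\mathbf{y})\big)^\top\] at $\mathbf{y}$ is non-singular.
   Context: Identify the torus $\mathbb{T}=\mathbb{R}/2\pi\mathbb{Z}$ with $[0,2\pi)$. The kernels $K_j$ are $2\pi$-periodic functions $\mathbb{R}\to[-\infty,\infty)$, real-valued and concave on $(0,2\pi)$, with $\lim_{t\downarrow0}K_j(t)=\lim_{t\uparrow2\pi}K_j(t)$ existing in $[-\infty,\infty)$. For $\mathbf{y}\in\mathbb{T}^n$ put $y_0=0$, $y_{n+1}=2\pi$, $F(\mathbf{y},t)=K_0(t)+\sum_{j=1}^nK_j(t-y_j)$. For a permutation $\sigma$ of $\{1,\dots,n\}$ ($\sigma(0)=0,\sigma(n+1)=n+1$), $S_\sigma=\{\mathbf{y}:0<y_{\sigma(1)}<\dots<y_{\sigma(n)}<2\pi\}$; for $\mathbf{y}\in S_\sigma$, $I_{\sigma(k)}(\mathbf{y})=[y_{\sigma(k)},y_{\sigma(k+1)}]$, $m_{\sigma(k)}(\mathbf{y})=\sup_{t\in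 I_{\sigma(k)}(\mathbf{y})}F(\mathbf{y},t)$, and $z_{\sigma(k)}(\mathbf{y})$ is the unique point of $I_{\sigma(k)}(\mathbf{y})$ where $F(\mathbf{y},\cdot)$ attains this maximum. Under the hypotheses, each $m_j$ is continuously differentiable on $S_\sigma$, so the Jacobian makes sense. *)

From HB Require Import structures.
From mathcomp Require Import all_boot all_order all_algebra all_fingroup.
From mathcomp Require Import all_classical all_reals all_analysis.
Set Implicit Arguments. Unset Strict Implicit. Unset Printing Implicit Defensive.
Import Order.TTheory GRing.Theory Num.Theory.
Import numFieldNormedType.Exports.
Local Open Scope classical_set_scope.
Local Open Scope ring_scope.

Section Defs.
Context {R : realType}.

Definition torus_kernel (K : R -> \bar R) : Prop :=
  [/\ (forall t, K (t + 2 * pi) = K t),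
      (forall t, K t != +oo%E),
      (forall t, 0 < t < 2 * pi -> K t \is a fin_num),
      (forall x y l, 0 < x < 2 * pi -> 0 < y < 2 * pi -> 0 <= l <= 1 ->
         l * fine (K x) + (1 - l) * fine (K y) <= fine (K (l * x + (1 - l) * y))) &
      (exists L : \bar R, L != +oo%E /\
         (K t @[t --> 0^'+] --> L) /\ (K t @[t --> (2 * pi)^'-] --> L))].

Definition C2_strictly_concave (K : R -> \bar R) : Prop :=
  let k := fun t => fine (K t) in
  forall t, 0 < t < 2 * pi ->
    [/\ derivable k t 1, derivable (derive1 k) t 1,
        {for t, continuous (derive1 (derive1 k))} & derive1 (derive1 k) t < 0].

Variable n : nat.

(* y_j for j = 0..n+1, with y_0 = 0 and y_{n+1} = 2pi; y_j = y ord0 (j-1) else *)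
Definition ypos (y : 'rV[R]_n) (j : nat) : R :=
  if j is k.+1 then (if (insub k : option 'I_n) is Some i then y ord0 i else 2 * pi)
  else 0.

(* the extension of a permutation of {1..n} (given as s : 'S_n acting on
   {0..n-1}, shifted by one) with sigma(0) = 0 and sigma(n+1) = n+1 *)
Definition sext (s : 'S_n) (k : nat) : nat :=
  if k is k'.+1 then (if (insub k' : option 'I_n) is Some i then (s i).+1 else n.+1)
  else 0.

Definition Fsum (K : 'I_n.+1 -> R -> \bar R) (y : 'rV[R]_n) (t : R) : \bar R :=
  (K ord0 t + \sum_(i < n) K (lift ord0 i) (t - y ord0 i)%R)%E.

Definition in_simplex (s : 'S_n) (y : 'rV[R]_n) : Prop :=
  forall k, (k <= n)%N -> ypos y (sext s k) < ypos y (sext s k.+1).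

(* endpoints of I_{sigma(k)}(y) = [y_{sigma(k)}, y_{sigma(k+1)}] *)
Definition Ileft (s : 'S_n) (y : 'rV[R]_n) (k : nat) : R := ypos y (sext s k).
Definition Iright (s : 'S_n) (y : 'rV[R]_n) (k : nat) : R := ypos y (sext s k.+1).

Definition msupE (K : 'I_n.+1 -> R -> \bar R) (s : 'S_n) (y : 'rV[R]_n)
    (k : nat) : \bar R :=
  ereal_sup (Fsum K y @` `[Ileft s y k, Iright s y k]).

Definition Delta (K : 'I_n.+1 -> R -> \bar R) (s : 'S_n) (y : 'rV[R]_n) : 'rV[R]_n :=
  \row_(i < n) (fine (msupE K s y i.+1) - fine (msupE K s y i)).

End Defs.

From HB Require Import structures.
From mathcomp Require Import all_boot all_order all_algebra all_fingroup.
From mathcomp Require Import all_classical all_reals all_analysis.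
From mathcomp Require Import ring lra.
Set Implicit Arguments. Unset Strict Implicit. Unset Printing Implicit Defensive.
Import Order.TTheory GRing.Theory Num.Theory.
Import numFieldNormedType.Exports.
Local Open Scope classical_set_scope.
Local Open Scope ring_scope.

(* On the arc I_k every term K_j(t - y_j) of F stays on one branch (0, 2pi) or
   (-2pi, 0) of the punctured torus, where K_j is C^2 with K_j'' < 0.  Hence F(y + h, .)
   lies below the tangent plane of F at (y, z_k), and the first-order condition at the
   interior maximiser z_k removes the t-direction: m_k(y + h) <= m_k(y) - sum_j
   K_j'(z_k - y_j) h_j.  Evaluating F(y + h, z_k) gives the matching lower bound up to
   o(h).  At the endpoints of the arc F(y, .) is strictly below m_k(y), since the
   maximiser is unique, and the tangent bound there only costs O(h).  So Delta is
   differentiable and its Jacobian has entries K_j'(z_i - y_j) - K_j'(z_{i+1} - y_j).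
   As K_j' is strictly decreasing, and z_i - y_j drops by a period exactly when i
   passes the position of y_j, the row of y_(sigma(i)) is negative in column i,
   nonnegative elsewhere, and telescopes to a negative sum: the matrix is nonsingular
   by a diagonal dominance argument. *)

(** * Functions with negative second derivative *)

Section NegativeSecondDerivative.
Context {R : realType} (f : R -> R) (a b : R).
Hypothesis f_derivable : forall x, a < x < b -> derivable f x 1.
Hypothesis f'_derivable : forall x, a < x < b -> derivable (derive1 f) x 1.
Hypothesis f''_lt0 : forall x, a < x < b -> derive1 (derive1 f) x < 0.

Lemma MVT_open (g : R -> R) : (forall x, a < x < b -> derivable g x 1) ->
  forall u v, a < u -> u < v -> v < b ->
  exists2 c, u < c < v & g v - g u = derive1 g c * (v - u).
Proof.
move=> g_derivable u v au uv vb.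
have inab x : u <= x <= v -> a < x < b by move=> /andP[? ?]; apply/andP; split; lra.
have [c] : exists2 c, c \in `]u, v[ & g v - g u = derive1 g c * (v - u).
  apply: MVT => // [x|].
    rewrite in_itv /= => /andP[ux xv]; rewrite derive1E.
    by apply/derivableP/g_derivable/inab; rewrite !ltW.
  by apply: derivable_within_continuous => x; rewrite in_itv /= => /inab /g_derivable.
by rewrite in_itv /=; exists c.
Qed.

Lemma derive1_decreasing u v : a < u -> u < v -> v < b -> derive1 f v < derive1 f u.
Proof.
move=> au uv vb; have [c /andP[uc cv] E] := MVT_open f'_derivable au uv vb.
rewrite -subr_lt0 E nmulr_rlt0 ?subr_gt0 //; apply: f''_lt0; apply/andP; split; lra.
Qed.

Lemma derive1_nonincreasing u v : a < u -> u <= v -> v < b -> derive1 f v <= derive1 f u.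
Proof.
move=> au; rewrite le_eqVlt => /predU1P[-> //|uv] vb.
by rewrite ltW // derive1_decreasing.
Qed.

Lemma tangent_line_ge u w : a < u < b -> a < w < b ->
  f u <= f w + derive1 f w * (u - w).
Proof.
move=> /andP[au ub] /andP[aw wb].
case: (ltgtP u w) => [uw|wu|->]; last by rewrite subrr mulr0 addr0.
- have [c /andP[uc cw] E] := MVT_open f_derivable au uw wb.
  have : derive1 f w * (w - u) <= derive1 f c * (w - u).
    by rewrite ler_pM2r ?subr_gt0 // derive1_nonincreasing ?ltW //; lra.
  lra.
- have [c /andP[wc cu] E] := MVT_open f_derivable aw wu ub.
  have : derive1 f c * (u - w) <= derive1 f w * (u - w).
    by rewrite ler_pM2r ?subr_gt0 // derive1_nonincreasing ?ltW //; lra.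
  lra.
Qed.

End NegativeSecondDerivative.

Lemma derivable_expansion {R : realType} (f : R -> R) (w : R) : derivable f w 1 ->
  forall e : R, 0 < e -> \forall t \near (0 : R),
    `|f (w + t) - f w - derive1 f w * t| <= e * `|t|.
Proof.
move=> /derivable_nbhs /eqaddoP fo e e0; apply: filterS (fo e e0) => t.
by rewrite /= !fctE /cst derive1E [t%:A]mulr1 [w + t]addrC opprD addrA [_ * t]mulrC.
Qed.

Section Wrap.
Context {R : realType}.

Definition wrap2pi (u : R) : R := if 0 < u then u else u + 2 * pi.

Definition on_branch (b : bool) (u : R) : bool :=
  if b then 0 < u < 2 * pi else - (2 * pi) < u < 0.

Definition same_branch (u u' : R) : Prop := exists b, on_branch b u && on_branch b u'.

Lemma wrap2pi_pos u : 0 < u -> wrap2pi u = u.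
Proof. by rewrite /wrap2pi => ->. Qed.

Lemma wrap2pi_neg u : u < 0 -> wrap2pi u = u + 2 * pi.
Proof. by move=> u0; rewrite /wrap2pi ltNge ltW. Qed.

Lemma wrap2pi_range b u : on_branch b u -> 0 < wrap2pi u < 2 * pi.
Proof.
case: b => /andP[u1 u2]; first by rewrite wrap2pi_pos // u1.
by rewrite wrap2pi_neg //; apply/andP; split; lra.
Qed.

Lemma wrap2piB u u' : same_branch u u' -> wrap2pi u' - wrap2pi u = u' - u.
Proof.
case=> -[] /andP[/andP[u1 u2] /andP[u'1 u'2]]; first by rewrite !wrap2pi_pos.
by rewrite !wrap2pi_neg //; ring.
Qed.

End Wrap.

(* For u in 2piZ the value is junk; it only ever gets multiplied by 0. *)
Definition kslope {R : realType} (K : R -> \bar R) (u : R) : R :=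
  derive1 (fun t => fine (K t)) (wrap2pi u).

Section Kernel.
Context {R : realType} (K : R -> \bar R).
Hypothesis K_torus : torus_kernel K.
Hypothesis K_concave : C2_strictly_concave K.
Let k := fun t => fine (K t).

Lemma kernel_periodic u : K (u + 2 * pi) = K u.
Proof. by case: K_torus. Qed.

Lemma kernel_wrap2piD u t : K (wrap2pi u + t) = K (u + t).
Proof. by rewrite /wrap2pi; case: ifP => // _; rewrite addrAC kernel_periodic. Qed.

Lemma kernel_wrap2pi u : K (wrap2pi u) = K u.
Proof. by have := kernel_wrap2piD u 0; rewrite !addr0. Qed.

Lemma kernel_fin_inner w : 0 < w < 2 * pi -> K w = (k w)%:E.
Proof. by case: K_torus => _ _ K_fin _ _ hw; rewrite /k fineK // K_fin. Qed.

Lemma kernel_fin b u : on_branch b u -> K u = (fine (K u))%:E.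
Proof. by move=> hu; rewrite -kernel_wrap2pi kernel_fin_inner // (wrap2pi_range hu). Qed.

Let k_derivable w : 0 < w < 2 * pi -> derivable k w 1.
Proof. move=> hw; have [h _ _ _] := K_concave hw; exact: h. Qed.

Let k'_derivable w : 0 < w < 2 * pi -> derivable (derive1 k) w 1.
Proof. move=> hw; have [_ h _ _] := K_concave hw; exact: h. Qed.

Let k''_lt0 w : 0 < w < 2 * pi -> derive1 (derive1 k) w < 0.
Proof. move=> hw; have [_ _ _ h] := K_concave hw; exact: h. Qed.

Lemma kernel_tangent u u' : u = u' \/ same_branch u u' ->
  (K u' <= K u + (kslope K u * (u' - u))%:E)%E.
Proof.
case=> [->|hb]; first by rewrite subrr mulr0 adde0.
have [b /andP[hu hu']] := hb.
rewrite -(kernel_wrap2pi u) -(kernel_wrap2pi u') -(wrap2piB hb).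
rewrite !kernel_fin_inner ?(wrap2pi_range hu) ?(wrap2pi_range hu') // -EFinD lee_fin.
apply: (tangent_line_ge k_derivable k'_derivable k''_lt0).
  exact: wrap2pi_range hu'.
exact: wrap2pi_range hu.
Qed.

Lemma kernel_lower_expansion b u : on_branch b u -> forall e : R, 0 < e ->
  \forall t \near (0 : R), ((fine (K u) + kslope K u * t - e * `|t|)%:E <= K (u + t))%E.
Proof.
move=> hu e e0; have /andP[w0 w2] := wrap2pi_range hu.
have Ku : fine (K u) = k (wrap2pi u) by rewrite /k kernel_wrap2pi.
have near_inner : \forall t \near (0 : R), 0 < wrap2pi u + t < 2 * pi.
  apply/nbhs_norm0P; exists (Num.min (wrap2pi u) (2 * pi - wrap2pi u)).
    by rewrite /= lt_min w0 subr_gt0 w2.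
  move=> t /=; rewrite lt_min !ltr_norml => /andP[/andP[? ?] /andP[? ?]].
  by apply/andP; split; lra.
near=> t.
have tin : 0 < wrap2pi u + t < 2 * pi by near: t; exact: near_inner.
rewrite -(kernel_wrap2piD u t) (kernel_fin_inner tin).
have : `|k (wrap2pi u + t) - k (wrap2pi u) - kslope K u * t| <= e * `|t|.
  by near: t; apply: derivable_expansion => //; exact: k_derivable (wrap2pi_range hu).
by rewrite Ku lee_fin ler_norml => /andP[? _]; lra.
Unshelve. all: by end_near. Qed.

Lemma kslope_nonincreasing b b' u v :
  on_branch b u -> on_branch b' v -> wrap2pi u <= wrap2pi v -> kslope K v <= kslope K u.
Proof.
move=> /wrap2pi_range/andP[u0 _] /wrap2pi_range/andP[_ v2] uv.
exact: (derive1_nonincreasing k'_derivable k''_lt0).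
Qed.

Lemma kslope_decreasing b b' u v :
  on_branch b u -> on_branch b' v -> wrap2pi u < wrap2pi v -> kslope K v < kslope K u.
Proof.
move=> /wrap2pi_range/andP[u0 _] /wrap2pi_range/andP[_ v2] uv.
exact: (derive1_decreasing k'_derivable k''_lt0).
Qed.

End Kernel.

Lemma coord_norm_le {R : realType} {n : nat} (h : 'rV[R]_n) (i : 'I_n) :
  `|h ord0 i| <= `|h|.
Proof.
rewrite [leRHS]/Num.norm /= mx_normrE; apply/bigmax_geP; right.
by exists (ord0, i).
Qed.

Lemma rV_norm_le {R : realType} {n : nat} (v : 'rV[R]_n) (c : R) :
  0 <= c -> (forall i, `|v ord0 i| <= c) -> `|v| <= c.
Proof.
move=> c0 hv; rewrite [`|v|]/Num.norm /= mx_normrE.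
by apply: bigmax_le => // -[i j] _ /=; rewrite (ord1 i).
Qed.

Section Simplex.
Context {R : realType} {n : nat} (s : 'S_n).

Definition slot (j : 'I_n) : nat := (s^-1 j)%g.+1.

Lemma sextS (i : 'I_n) : sext s i.+1 = (s i).+1.
Proof. by rewrite /sext; case: insubP => [i' _ /val_inj -> //|]; rewrite ltn_ord. Qed.

Lemma sext_last : sext s n.+1 = n.+1.
Proof. by rewrite /sext insubF // ltnn. Qed.

Lemma ypos_last (y : 'rV[R]_n) : ypos y n.+1 = 2 * pi.
Proof. by rewrite /ypos insubF // ltnn. Qed.

Lemma yposS (y : 'rV[R]_n) (i : 'I_n) : ypos y i.+1 = y ord0 i.
Proof. by rewrite /ypos; case: insubP => [i' _ /val_inj -> //|]; rewrite ltn_ord. Qed.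

Lemma ypos_slot (y : 'rV[R]_n) (j : 'I_n) : ypos y (sext s (slot j)) = y ord0 j.
Proof. by rewrite sextS permKV yposS. Qed.

Lemma slot_perm (i : 'I_n) : slot (s i) = i.+1.
Proof. by rewrite /slot permK. Qed.

Definition ypos_shift (h : 'rV[R]_n) (j : nat) : R :=
  if j is k.+1 then (if (insub k : option 'I_n) is Some i then h ord0 i else 0) else 0.

Lemma yposD (y h : 'rV[R]_n) j : ypos (y + h) j = ypos y j + ypos_shift h j.
Proof.
case: j => [|k]; first by rewrite /ypos addr0.
by rewrite /ypos /ypos_shift; case: insubP => [i _ _|_]; rewrite ?mxE ?addr0.
Qed.

Lemma ypos_shift_norm (h : 'rV[R]_n) j : `|ypos_shift h j| <= `|h|.
Proof.
case: j => [|k] /=; first by rewrite normr0.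
by case: insubP => [i _ _|_]; [exact: coord_norm_le|rewrite normr0].
Qed.

Section Vertices.
Variable y : 'rV[R]_n.
Hypothesis y_simplex : in_simplex s y.

Lemma simplex_lt a b : (a < b)%N -> (b <= n.+1)%N ->
  ypos y (sext s a) < ypos y (sext s b).
Proof.
move=> + bn; elim: b bn => // b IH bn; rewrite ltnS leq_eqVlt => /predU1P[-> |ab].
  exact: y_simplex.
exact: lt_trans (IH (ltnW bn) ab) (y_simplex bn).
Qed.

Lemma simplex_le a b : (a <= b)%N -> (b <= n.+1)%N ->
  ypos y (sext s a) <= ypos y (sext s b).
Proof. by rewrite leq_eqVlt => /predU1P[-> //|ab] bn; rewrite ltW // simplex_lt. Qed.

Lemma simplex_vertex_bound q : (q <= n.+1)%N -> 0 <= ypos y (sext s q) <= 2 * pi.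
Proof.
move=> qn; rewrite (simplex_le (leq0n q) qn).
by have := simplex_le qn (leqnn _); rewrite sext_last ypos_last.
Qed.

Lemma simplex_vertex_inner q : (0 < q <= n)%N -> 0 < ypos y (sext s q) < 2 * pi.
Proof.
case/andP=> q0 qn; have := simplex_lt q0 (leqW qn).
by have := simplex_lt (qn : (q < n.+1)%N) (leqnn _); rewrite sext_last ypos_last => -> ->.
Qed.

Lemma simplex_coord_bound j : 0 < y ord0 j < 2 * pi.
Proof. by rewrite -(ypos_slot y j) simplex_vertex_inner // /slot ltn_ord. Qed.

Lemma vertex_sub_coord q j : (q <= n.+1)%N -> slot j != q ->
  on_branch (slot j < q)%N (ypos y (sext s q) - y ord0 j).
Proof.
move=> qn; rewrite neq_ltn /on_branch.
have /andP[q0 q2] := simplex_vertex_bound qn.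
have /andP[y0 y2] := simplex_coord_bound j.
have sn : (slot j <= n.+1)%N by rewrite /slot ltnS ltnW.
case: ltnP => [jq|qj] /= lt; first have := simplex_lt jq qn.
  by rewrite ypos_slot => ?; apply/andP; split; lra.
by have := simplex_lt lt sn; rewrite ypos_slot => ?; apply/andP; split; lra.
Qed.

Variables (k : nat) (t : R).
Hypothesis kn : (k <= n)%N.
Hypothesis t_arc : ypos y (sext s k) < t < ypos y (sext s k.+1).

Lemma arc_bound : 0 < t < 2 * pi.
Proof.
have /andP[a1 _] := simplex_vertex_bound (leqW kn).
have /andP[_ b2] := simplex_vertex_bound (kn : (k < n.+1)%N).
by case/andP: t_arc => ? ?; apply/andP; split; lra.
Qed.

Lemma arc_sub_coord j : on_branch (slot j <= k)%N (t - y ord0 j).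
Proof.
have /andP[t0 t2] := arc_bound; have /andP[y0 y2] := simplex_coord_bound j.
case/andP: t_arc => t1 t2'; rewrite /on_branch; case: (leqP (slot j) k) => hj.
  by have := simplex_le hj (leqW kn); rewrite ypos_slot => ?; apply/andP; split; lra.
have sn : (slot j <= n.+1)%N by rewrite /slot ltnS ltnW.
by have := simplex_le hj sn; rewrite ypos_slot => ?; apply/andP; split; lra.
Qed.

End Vertices.

Lemma simplex_near (y : 'rV[R]_n) : in_simplex s y ->
  \forall h \near (0 : 'rV[R]_n), in_simplex s (y + h).
Proof.
move=> hy.
have step (k : 'I_n.+1) : \forall h \near (0 : 'rV[R]_n),
    ypos (y + h) (sext s k) < ypos (y + h) (sext s k.+1).
  apply/nbhs_norm0P; have hk := hy k (ltn_ord k : (k <= n)%N).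
  exists ((ypos y (sext s k.+1) - ypos y (sext s k)) / 2).
    by rewrite /= divr_gt0 // subr_gt0.
  move=> h /= hh; rewrite !yposD.
  have := ypos_shift_norm h (sext s k); have := ypos_shift_norm h (sext s k.+1).
  by rewrite !ler_norml => /andP[? ?] /andP[? ?]; lra.
apply: filterS (filter_forall (nbhs_filter (0 : 'rV[R]_n)) step) => h hh k kn.
exact: (hh (Ordinal (kn : (k < n.+1)%N))).
Qed.

Lemma arc_near (y : 'rV[R]_n) k (z : R) :
  ypos y (sext s k) < z < ypos y (sext s k.+1) ->
  \forall h \near (0 : 'rV[R]_n), ypos (y + h) (sext s k) < z < ypos (y + h) (sext s k.+1).
Proof.
move=> /andP[z1 z2]; apply/nbhs_norm0P.
exists (Num.min (z - ypos y (sext s k)) (ypos y (sext s k.+1) - z)).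
  by rewrite /= lt_min !subr_gt0 z1 z2.
move=> h /=; rewrite lt_min => /andP[d1 d2]; rewrite !yposD.
have := ypos_shift_norm h (sext s k); have := ypos_shift_norm h (sext s k.+1).
by rewrite !ler_norml => /andP[? ?] /andP[? ?]; apply/andP; split; lra.
Qed.

End Simplex.

(** * Danskin's formula for m_k *)

Lemma slope_eq0_of_local_max {R : realType} (G : R -> \bar R) (g S : R) :
  (forall e : R, 0 < e -> \forall t \near (0 : R), ((g + S * t - e * `|t|)%:E <= G t)%E) ->
  (\forall t \near (0 : R), (G t <= g%:E)%E) -> S = 0.
Proof.
move=> lower upper; apply/eqP/negPn/negP => S0.
have e0 : 0 < `|S| / 2 by rewrite divr_gt0 ?normr_gt0.
have /nbhs_norm0P[d d0 Hd] : \forall t \near (0 : R), S * t <= `|S| / 2 * `|t|.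
  apply: filterS2 (lower _ e0) upper => t lo up.
  by have := le_trans lo up; rewrite lee_fin; lra.
have t_d : `|Num.sg S * (d / 2)| = d / 2.
  by rewrite normrM normr_sg S0 mul1r gtr0_norm ?divr_gt0.
have := Hd (Num.sg S * (d / 2)); rewrite /= t_d mulrA [S * _]mulrC -normrEsg.
have : 0 < `|S| * d by rewrite mulr_gt0 ?normr_gt0.
have : d / 2 < d by have : 0 < d := d0; lra.
by move=> hd Sd /(_ hd); nra.
Qed.

Lemma near0_lt_of_linear_bound {R : realType} {n : nat} (f : 'rV[R]_n -> R) (C gap : R) :
  0 < gap -> (forall h, `|f h| <= C * `|h|) -> \forall h \near (0 : 'rV[R]_n), f h < gap.
Proof.
move=> gap0 fC; have C1 : 0 < `|C| + 1 by rewrite ltr_wpDl.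
apply/nbhs_norm0P; exists (gap / (`|C| + 1)); first by rewrite /= divr_gt0.
move=> h /=; rewrite ltr_pdivlMr // => hh.
apply: le_lt_trans (ler_norm _) (le_lt_trans (fC h) (le_lt_trans _ hh)).
by rewrite mulrC ler_wpM2l // (le_trans (ler_norm C)) // lerDl.
Qed.

Section Fsum.
Context {R : realType} {n : nat} (K : 'I_n.+1 -> R -> \bar R).
Hypothesis K_torus : forall j, torus_kernel (K j).
Hypothesis K_concave : forall j, C2_strictly_concave (K j).

Definition Freal (y : 'rV[R]_n) (t : R) : R :=
  fine (K ord0 t) + \sum_(j < n) fine (K (lift ord0 j) (t - y ord0 j)).

Definition Fslope (y : 'rV[R]_n) (t : R) (j : 'I_n) : R :=
  kslope (K (lift ord0 j)) (t - y ord0 j).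

Lemma Fsum_fin (y : 'rV[R]_n) (t : R) :
  on_branch true t -> (forall j, exists b, on_branch b (t - y ord0 j)) ->
  Fsum K y t = (Freal y t)%:E.
Proof.
move=> ht hj; rewrite /Fsum /Freal EFinD (kernel_fin (K_torus _) ht) -sumEFin.
by congr (_ + _)%E; apply: eq_bigr => j _; have [b hb] := hj j; exact: kernel_fin hb.
Qed.

Lemma Fsum_tangent (y y' : 'rV[R]_n) (t0 t : R) :
  t0 = t \/ same_branch t0 t ->
  (forall j, t0 - y ord0 j = t - y' ord0 j \/ same_branch (t0 - y ord0 j) (t - y' ord0 j)) ->
  (Fsum K y' t <= Fsum K y t0 + (kslope (K ord0) t0 * (t - t0) +
     \sum_(j < n) Fslope y t0 j * ((t - y' ord0 j) - (t0 - y ord0 j)))%:E)%E.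
Proof.
move=> c0 cj; rewrite /Fsum EFinD addeACA; apply: leeD.
  exact: (kernel_tangent (K_torus _) (K_concave _)).
rewrite -sumEFin -big_split /=; apply: lee_sum => j _.
exact: (kernel_tangent (K_torus _) (K_concave _)).
Qed.

Lemma Fsum_ge (y : 'rV[R]_n) (t a0 : R) (a : 'I_n -> R) :
  (a0%:E <= K ord0 t)%E -> (forall j, ((a j)%:E <= K (lift ord0 j) (t - y ord0 j))%E) ->
  ((a0 + \sum_(j < n) a j)%:E <= Fsum K y t)%E.
Proof.
move=> h0 hj; rewrite /Fsum EFinD; apply: leeD => //.
by rewrite -sumEFin; apply: lee_sum => j _; exact: hj.
Qed.

Lemma kernels_lower_expansion (y : 'rV[R]_n) (z e : R) : on_branch true z ->
  (forall j, exists b, on_branch b (z - y ord0 j)) -> 0 < e ->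
  \forall u \near (0 : R),
    ((fine (K ord0 z) + kslope (K ord0) z * u - e * `|u|)%:E <= K ord0 (z + u))%E /\
    forall j, ((fine (K (lift ord0 j) (z - y ord0 j)) + Fslope y z j * u - e * `|u|)%:E
                 <= K (lift ord0 j) (z - y ord0 j + u))%E.
Proof.
move=> hz hj e0; near=> u; split.
  by near: u; exact: (kernel_lower_expansion (K_torus _) (K_concave _) hz).
near: u; apply: filter_forall => j; have [b hb] := hj j.
exact: (kernel_lower_expansion (K_torus _) (K_concave _) hb).
Unshelve. all: by end_near. Qed.

Lemma Fsum_le_msupE (s : 'S_n) (y : 'rV[R]_n) k t :
  ypos y (sext s k) <= t <= ypos y (sext s k.+1) -> (Fsum K y t <= msupE K s y k)%E.
Proof. by move=> ht; apply: ereal_sup_ubound; exists t. Qed.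

End Fsum.

Section ArcMaximum.
Context {R : realType} {n : nat} (K : 'I_n.+1 -> R -> \bar R) (s : 'S_n).
Hypothesis K_torus : forall j, torus_kernel (K j).
Hypothesis K_concave : forall j, C2_strictly_concave (K j).
Variables (y : 'rV[R]_n) (k : nat) (z : R).
Hypothesis y_simplex : in_simplex s y.
Hypothesis kn : (k <= n)%N.
Hypothesis z_arc : ypos y (sext s k) < z < ypos y (sext s k.+1).
Hypothesis z_max : Fsum K y z = msupE K s y k.
Hypothesis z_unique : forall t, Ileft s y k <= t <= Iright s y k ->
  Fsum K y t = msupE K s y k -> t = z.

Let z_inner : on_branch true z := arc_bound y_simplex kn z_arc.
Let z_branch j : exists b, on_branch b (z - y ord0 j).
Proof. by exists (slot s j <= k)%N; exact: arc_sub_coord. Qed.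

Lemma Fsum_max : Fsum K y z = (Freal K y z)%:E.
Proof. exact: (Fsum_fin K_torus). Qed.

Lemma slopes_sum_eq0 : kslope (K ord0) z + \sum_(j < n) Fslope K y z j = 0.
Proof.
apply: (@slope_eq0_of_local_max _ (fun t => Fsum K y (z + t)) (Freal K y z)).
  move=> e e0; have e'0 : 0 < e / n.+1%:R by rewrite divr_gt0.
  apply: filterS (kernels_lower_expansion K_torus K_concave z_inner z_branch e'0).
  move=> t [l0 lj]; apply: le_trans (Fsum_ge l0 (a := fun j => _) _) => [|j]; last first.
    by rewrite addrAC; exact: lj.
  rewrite lee_fin !big_split /= sumrN -mulr_suml sumr_const card_ord.
  have : e * `|t| = e / n.+1%:R * `|t| + e / n.+1%:R * `|t| *+ n.
    by rewrite -mulrS -(mulr_natr (e / n.+1%:R * `|t|)) mulrAC divfK ?pnatr_eq0.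
  by rewrite /Freal mulrDl; set a := e / n.+1%:R * `|t|; set b := a *+ n; lra.
have near_arc : \forall t \near (0 : R),
    ypos y (sext s k) <= z + t <= ypos y (sext s k.+1).
  case/andP: z_arc => z1 z2; apply/nbhs_norm0P.
  exists (Num.min (z - ypos y (sext s k)) (ypos y (sext s k.+1) - z)).
    by rewrite /= lt_min !subr_gt0 z1 z2.
  move=> t /=; rewrite lt_min !ltr_norml => /andP[/andP[? ?] /andP[? ?]].
  by apply/andP; split; lra.
apply: filterS near_arc => t ht; rewrite -Fsum_max z_max.
exact: Fsum_le_msupE.
Qed.

Lemma Fsum_arc_le (h : 'rV[R]_n) t : in_simplex s (y + h) ->
  ypos (y + h) (sext s k) < t < ypos (y + h) (sext s k.+1) ->
  (Fsum K (y + h) t <= (Freal K y z - \sum_(j < n) Fslope K y z j * h ord0 j)%:E)%E.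
Proof.
move=> yh_simplex t_arc.
apply: le_trans (Fsum_tangent K_torus K_concave (y := y) (t0 := z) _ _) _.
- by right; exists true; rewrite z_inner; exact: (arc_bound yh_simplex kn t_arc).
- move=> j; right; exists (slot s j <= k)%N.
  by rewrite (arc_sub_coord y_simplex kn z_arc) (arc_sub_coord yh_simplex kn t_arc).
rewrite Fsum_max lee_fin lerD2l.
have -> : \sum_(j < n) Fslope K y z j * (t - (y + h) ord0 j - (z - y ord0 j)) =
    (\sum_(j < n) Fslope K y z j) * (t - z) - \sum_(j < n) Fslope K y z j * h ord0 j.
  by rewrite mulr_suml -sumrB; apply: eq_bigr => j _; rewrite mxE; ring.
by rewrite addrA -mulrDl slopes_sum_eq0 mul0r add0r.
Qed.

Lemma Fsum_vertex_le (h : 'rV[R]_n) q : in_simplex s (y + h) -> (q <= n.+1)%N ->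
  (Fsum K (y + h) (ypos (y + h) (sext s q)) <= Fsum K y (ypos y (sext s q)) +
    (kslope (K ord0) (ypos y (sext s q)) * ypos_shift h (sext s q) +
     \sum_(j < n) Fslope K y (ypos y (sext s q)) j * (ypos_shift h (sext s q) - h ord0 j))%:E)%E.
Proof.
move=> yh_simplex qn.
apply: le_trans (Fsum_tangent K_torus K_concave (y := y) (t0 := ypos y (sext s q)) _ _) _.
- have [->|q0] := posnP q; first by left.
  rewrite leq_eqVlt in qn; case/predU1P: qn => [->|qn].
    by left; rewrite sext_last !ypos_last.
  by right; exists true; rewrite /= !simplex_vertex_inner // q0.
- move=> j; have [<-|jq] := eqVneq (slot s j) q.
    by left; rewrite !ypos_slot !subrr.
  by right; exists (slot s j < q)%N; rewrite !vertex_sub_coord.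
set v := ypos y (sext s q); set dv := ypos_shift h (sext s q).
rewrite yposD -/v -/dv (addrC v) addrK.
suff -> : \sum_(j < n) Fslope K y v j * (dv + v - (y + h) ord0 j - (v - y ord0 j)) =
  \sum_(j < n) Fslope K y v j * (dv - h ord0 j) by [].
by apply: eq_bigr => j _; rewrite mxE; congr (_ * _); ring.
Qed.

Lemma vertex_lt_max q : (k <= q <= k.+1)%N ->
  (Fsum K y (ypos y (sext s q)) < (Freal K y z)%:E)%E.
Proof.
case/andP=> kq qk; have qn : (q <= n.+1)%N := leq_trans qk (kn : (k < n.+1)%N).
have q_arc : Ileft s y k <= ypos y (sext s q) <= Iright s y k.
  by rewrite !simplex_le.
rewrite -Fsum_max z_max lt_neqAle Fsum_le_msupE // andbT.
apply/eqP => /(z_unique q_arc) qz; move: z_arc; rewrite -qz.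
have [->|qk'] := eqVneq q k.+1; first by rewrite ltxx andbF.
have -> : q = k by apply/eqP; rewrite eqn_leq kq -ltnS ltn_neqAle qk' qk.
by rewrite ltxx.
Qed.

Lemma near_vertex_le q : (k <= q <= k.+1)%N ->
  \forall h \near (0 : 'rV[R]_n), in_simplex s (y + h) ->
    (Fsum K (y + h) (ypos (y + h) (sext s q)) <=
     (Freal K y z - \sum_(j < n) Fslope K y z j * h ord0 j)%:E)%E.
Proof.
move=> hq; have qn : (q <= n.+1)%N := leq_trans (proj2 (andP hq)) (kn : (k < n.+1)%N).
set v := ypos y (sext s q).
(* The gap between the tangent bound at the vertex and the target bound is O(|h|). *)
pose L h := kslope (K ord0) v * ypos_shift h (sext s q) +
  \sum_(j < n) (Fslope K y v j * (ypos_shift h (sext s q) - h ord0 j) +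
                Fslope K y z j * h ord0 j).
have L_bound h : `|L h| <= (`|kslope (K ord0) v| +
    \sum_(j < n) (`|Fslope K y v j| * 2 + `|Fslope K y z j|)) * `|h|.
  have Yh := ypos_shift_norm h (sext s q).
  rewrite mulrDl mulr_suml; apply: le_trans (ler_normD _ _) (lerD _ _).
    by rewrite normrM ler_wpM2l.
  apply: le_trans (ler_norm_sum _ _ _) (ler_sum _ _) => j _.
  rewrite mulrDl; apply: le_trans (ler_normD _ _) (lerD _ _); rewrite normrM -?mulrA ler_wpM2l //.
    by rewrite mulr_natl mulr2n; apply: le_trans (ler_normB _ _) (lerD Yh (coord_norm_le h j)).
  exact: coord_norm_le.
have := vertex_lt_max hq; rewrite -/v; case E: (Fsum K y v) => [r| |] // r_lt.
  have gap0 : 0 < Freal K y z - r by rewrite subr_gt0 -lte_fin.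
  apply: filterS (near0_lt_of_linear_bound gap0 L_bound) => h Lh yh_simplex.
  apply: le_trans (Fsum_vertex_le yh_simplex qn) _; rewrite -/v E -EFinD lee_fin.
  by move: Lh; rewrite /L big_split /=; lra.
apply: filterS (simplex_near y_simplex) => h _ yh_simplex.
by apply: le_trans (Fsum_vertex_le yh_simplex qn) _; rewrite -/v E /= leNye.
Qed.

Lemma near_msup_le : \forall h \near (0 : 'rV[R]_n),
  (msupE K s (y + h) k <= (Freal K y z - \sum_(j < n) Fslope K y z j * h ord0 j)%:E)%E.
Proof.
have left_end : (k <= k <= k.+1)%N by rewrite leqnn leqnSn.
have right_end : (k <= k.+1 <= k.+1)%N by rewrite leqnSn leqnn.
near=> h.
have yh_simplex : in_simplex s (y + h) by near: h; exact: simplex_near.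
have left_le : (Fsum K (y + h) (ypos (y + h) (sext s k)) <=
    (Freal K y z - \sum_(j < n) Fslope K y z j * h ord0 j)%:E)%E.
  by move: yh_simplex; near: h; exact: near_vertex_le left_end.
have right_le : (Fsum K (y + h) (ypos (y + h) (sext s k.+1)) <=
    (Freal K y z - \sum_(j < n) Fslope K y z j * h ord0 j)%:E)%E.
  by move: yh_simplex; near: h; exact: near_vertex_le right_end.
apply: ge_ereal_sup => _ [t /= + <-]; rewrite in_itv /= le_eqVlt.
case/andP=> /predU1P[<- //|t1]; rewrite le_eqVlt => /predU1P[-> //|t2].
by apply: Fsum_arc_le; rewrite ?t1.
Unshelve. all: by end_near. Qed.

Lemma near_msup_ge (e : R) : 0 < e -> \forall h \near (0 : 'rV[R]_n),
  ((Freal K y z - \sum_(j < n) Fslope K y z j * (h : 'rV[R]_n) ord0 j - e * `|h|)%:E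
    <= msupE K s (y + h) k)%E.
Proof.
move=> e0; have e'0 : 0 < e / n.+1%:R by rewrite divr_gt0.
have /nbhs_norm0P[d d0 lower] :=
  kernels_lower_expansion K_torus K_concave z_inner z_branch e'0.
have /nbhs_norm0P[d' d'0 near_arc] := arc_near z_arc.
have {}d0 : 0 < d := d0; have {}d'0 : 0 < d' := d'0.
apply/nbhs_norm0P; exists (Num.min d d'); first by rewrite /= lt_min d0 d'0.
move=> h; rewrite /= lt_min => /andP[hd /near_arc /andP[z1 z2]].
have zh_arc : ypos (y + h) (sext s k) <= z <= ypos (y + h) (sext s k.+1) by rewrite !ltW.
apply: le_trans _ (Fsum_le_msupE K zh_arc).
have l0 : ((fine (K ord0 z))%:E <= K ord0 z)%E by rewrite -(kernel_fin (K_torus _) z_inner).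
apply: le_trans (Fsum_ge (a := fun j => fine (K (lift ord0 j) (z - y ord0 j)) +
    Fslope K y z j * - h ord0 j - e / n.+1%:R * `|- h ord0 j|) l0 _) => [|j]; last first.
  have hj : `|- h ord0 j| < d by rewrite normrN; exact: le_lt_trans (coord_norm_le h j) hd.
  by have [_ lj] := lower _ hj; rewrite mxE opprD addrA; exact: lj.
have hsum : e / n.+1%:R * \sum_(j < n) `|h ord0 j| <= e * `|h|.
  apply: le_trans (ler_wpM2l (ltW e'0) (_ : _ <= n.+1%:R * `|h|)) _.
    apply: le_trans (ler_sum _ (fun j _ => coord_norm_le h j)) _.
    by rewrite sumr_const card_ord -[_ *+ n]mulr_natl ler_wpM2r // ler_nat.
  by rewrite mulrA divfK ?pnatr_eq0.
rewrite lee_fin /Freal !big_split /=.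
have -> : \sum_(j < n) Fslope K y z j * - h ord0 j = - \sum_(j < n) Fslope K y z j * h ord0 j.
  by rewrite -sumrN; apply: eq_bigr => j _; rewrite mulrN.
have -> : \sum_(j < n) - (e / n.+1%:R * `|- h ord0 j|) =
    - (e / n.+1%:R * \sum_(j < n) `|h ord0 j|).
  by rewrite sumrN mulr_sumr; congr -%R; apply: eq_bigr => j _; rewrite normrN.
by rewrite !addrA; exact: lerB (lexx _) hsum.
Qed.

Lemma msup_expansion (e : R) : 0 < e -> \forall h \near (0 : 'rV[R]_n),
  `|fine (msupE K s (y + h) k) - fine (msupE K s y k) +
    \sum_(j < n) Fslope K y z j * h ord0 j| <= e * `|h|.
Proof.
move=> e0; rewrite -z_max Fsum_max /=.
apply: filterS2 (near_msup_ge e0) near_msup_le => h.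
case: (msupE K s (y + h) k) => [r| |] //=; rewrite !lee_fin => lo up.
by rewrite ler_norml; apply/andP; split; lra.
Qed.

End ArcMaximum.

(** * The Jacobian of Delta *)

Lemma unitmx_row_dominant {R : realFieldType} {n : nat} (A : 'M[R]_n) (p : 'I_n -> 'I_n) :
  (forall i, A (p i) i < 0) -> (forall i i', i' != i -> 0 <= A (p i) i') ->
  (forall i, \sum_(i' < n) A (p i) i' < 0) -> A \in unitmx.
Proof.
move=> diag_neg off_nonneg row_neg; rewrite unitmxE unitfE -det_tr.
apply/det0P => -[v v_neq0 vA]; move/eqP: v_neq0; apply; apply/rowP => i0; rewrite mxE.
apply/eqP; apply: contraT => vi0.
have [im _ im_max] := @eq_bigmax _ R _ 0 i0 predT (fun i => `|v ord0 i|) erefl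
  (fun i _ => normr_ge0 _).
have v_le i : `|v ord0 i| <= `|v ord0 im| by rewrite -im_max; apply: le_bigmax.
have vim_gt0 : 0 < `|v ord0 im| by apply: lt_le_trans (v_le i0); rewrite normr_gt0.
have := congr1 (fun M : 'rV[R]_n => M ord0 (p im)) vA; rewrite !mxE.
under eq_bigr do rewrite mxE; rewrite (bigD1 im) //= => /eqP; rewrite addr_eq0 => /eqP vim.
have lhs : `|v ord0 im| * - A (p im) im <= `|v ord0 im| * \sum_(i | i != im) A (p im) i.
  rewrite -(ltr0_norm (diag_neg im)) -normrM vim normrN.
  apply: le_trans (ler_norm_sum _ _ _) _; rewrite mulr_sumr; apply: ler_sum => i hi.
  by rewrite normrM (ger0_norm (off_nonneg _ _ hi)) ler_wpM2r ?off_nonneg.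
have := row_neg im; rewrite (bigD1 im) //= => sum_neg.
have : \sum_(i | i != im) A (p im) i < - A (p im) im by lra.
by rewrite -(ltr_pM2l vim_gt0); lra.
Qed.

Lemma mulmxr_continuous {R : realType} {m n : nat} (A : 'M[R]_(m, n)) :
  continuous (mulmxr A : 'rV[R]_m -> 'rV[R]_n).
Proof.
move=> x; apply: differentiable_continuous.
have -> : (mulmxr A : 'rV[R]_m -> 'rV[R]_n) =
    \sum_(j < m) (fun h : 'rV[R]_m => h ord0 j *: row j A).
  apply/funext => h; rewrite fct_sumE /= mulmx_sum_row.
  by apply: eq_bigr => j _; rewrite (ord1 (0 : 'I_1)).
apply: differentiable_sum => j; apply: differentiableZl.
exact: differentiable_coord.
Qed.

Lemma expansion_jacobian {R : realType} {m n : nat} (f : 'rV[R]_m -> 'rV[R]_n)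
    (y : 'rV[R]_m) (A : 'M[R]_(m, n)) :
  (forall e : R, 0 < e -> \forall h \near (0 : 'rV[R]_m),
     `|f (y + h) - f y - h *m A| <= e * `|h|) ->
  differentiable f y /\ 'J f y = A.
Proof.
move=> small.
have f_exp : f \o shift y = cst (f y) + mulmxr A +o_ (0 : 'rV[R]_m) id.
  apply/eqaddoP => e e0; apply: filterS (small e e0) => h.
  by rewrite !fctE /= [h + y]addrC opprD addrA.
have df := diff_unique (@mulmxr_continuous _ _ _ A) f_exp.
split; first by apply/diff_locallyP; rewrite df; split; [exact: mulmxr_continuous|].
by rewrite /jacobian df; apply/matrixP => i j; rewrite /lin1_mx mxE /= -rowE mxE.
Qed.

Section Jacobian.
Context {R : realType} {n : nat} (K : 'I_n.+1 -> R -> \bar R) (s : 'S_n).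
Hypothesis K_torus : forall j, torus_kernel (K j).
Hypothesis K_concave : forall j, C2_strictly_concave (K j).
Variables (y : 'rV[R]_n) (z : nat -> R).
Hypothesis y_simplex : in_simplex s y.
Hypothesis z_arc : forall k, (k <= n)%N -> ypos y (sext s k) < z k < ypos y (sext s k.+1).

(* Row j, column i holds the derivative of Delta_i in y_j ('J acts on row vectors). *)
Definition Delta_jacobian_mx : 'M[R]_n :=
  \matrix_(j, i) (Fslope K y (z i) j - Fslope K y (z i.+1) j).

Let z_le a b : (a <= b)%N -> (b <= n)%N -> z a <= z b.
Proof.
move=> ab bn; have /andP[_ za] := z_arc (leq_trans ab bn); have /andP[zb _] := z_arc bn.
rewrite leq_eqVlt in ab; case/predU1P: ab => [-> //|ab].
by apply/ltW/(lt_trans za)/(le_lt_trans _ zb); apply: simplex_le; rewrite // leqW.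
Qed.

Lemma Fslope_z_lt a b j : (a < slot s j <= b)%N -> (b <= n)%N ->
  Fslope K y (z a) j < Fslope K y (z b) j.
Proof.
case/andP=> aj jb bn; have an : (a <= n)%N := leq_trans (ltnW (leq_trans aj jb)) bn.
have := arc_sub_coord y_simplex an (z_arc an) j; rewrite leqNgt aj => ha.
have := arc_sub_coord y_simplex bn (z_arc bn) j; rewrite jb => hb.
apply: (kslope_decreasing (K_concave _) hb ha).
have /andP[za0 za2] := arc_bound y_simplex an (z_arc an).
have /andP[zb0 zb2] := arc_bound y_simplex bn (z_arc bn).
by case/andP: ha => _ ha; case/andP: hb => hb _; rewrite wrap2pi_pos // wrap2pi_neg //; lra.
Qed.

Lemma Fslope_z_le a b j : (a <= b)%N -> (b <= n)%N ->
  (slot s j <= a)%N = (slot s j <= b)%N -> Fslope K y (z b) j <= Fslope K y (z a) j.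
Proof.
move=> ab bn same; have an : (a <= n)%N := leq_trans ab bn.
have ha := arc_sub_coord y_simplex an (z_arc an) j.
have hb := arc_sub_coord y_simplex bn (z_arc bn) j; rewrite -same in hb.
apply: (kslope_nonincreasing (K_concave _) ha hb); have zab := z_le ab bn.
move: ha hb; case: (slot s j <= a)%N => /andP[? ?] /andP[? ?].
  by rewrite !wrap2pi_pos //; lra.
by rewrite !wrap2pi_neg //; lra.
Qed.

Lemma Delta_jacobian_mx_unit : Delta_jacobian_mx \in unitmx.
Proof.
apply: (unitmx_row_dominant (p := s)) => [i|i i' ne|i]; rewrite ?mxE.
- by rewrite subr_lt0 Fslope_z_lt // slot_perm ltnSn.
- rewrite subr_ge0 Fslope_z_le // slot_perm ltnS.
  by case: ltngtP => // ii'; move: ne; rewrite (val_inj ii') eqxx.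
under eq_bigr do rewrite mxE.
rewrite -(big_mkord xpredT (fun i' => Fslope K y (z i') (s i) - Fslope K y (z i'.+1) (s i))).
rewrite (telescope_sumr_eq (fun k => - Fslope K y (z k) (s i))) // => [|k _].
  by rewrite opprK addrC subr_lt0 Fslope_z_lt // slot_perm ltn_ord.
by rewrite opprK addrC.
Qed.

Hypothesis z_max : forall k, (k <= n)%N -> Fsum K y (z k) = msupE K s y k.
Hypothesis z_unique : forall k, (k <= n)%N -> forall t, Ileft s y k <= t <= Iright s y k ->
  Fsum K y t = msupE K s y k -> t = z k.

Lemma Delta_expansion (e : R) : 0 < e -> \forall h \near (0 : 'rV[R]_n),
  `|Delta K s (y + h) - Delta K s y - h *m Delta_jacobian_mx| <= e * `|h|.
Proof.
move=> e0; have e2 : 0 < e / 2 by rewrite divr_gt0.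
have near_k (k : 'I_n.+1) := msup_expansion K_torus K_concave y_simplex (ltn_ord k)
  (z_arc (ltn_ord k)) (z_max (ltn_ord k)) (z_unique (ltn_ord k)) e2.
apply: filterS (filter_forall (nbhs_filter (0 : 'rV[R]_n)) near_k) => h hk.
apply: rV_norm_le => [|i]; first by rewrite mulr_ge0 // ltW.
have := hk (lift ord0 i); have := hk (widen_ord (leqnSn n) i); rewrite lift0 /=.
set a := _ - _ + _; set b := _ - _ + _ => ha hb.
have -> : (Delta K s (y + h) - Delta K s y - h *m Delta_jacobian_mx) ord0 i = b - a.
  rewrite !mxE /a /b.
  have -> : \sum_j h ord0 j * Delta_jacobian_mx j i =
      \sum_(j < n) Fslope K y (z i) j * h ord0 j - \sum_(j < n) Fslope K y (z i.+1) j * h ord0 j.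
    by rewrite -sumrB; apply: eq_bigr => j _; rewrite mxE; ring.
  ring.
by apply: le_trans (ler_normB _ _) _; lra.
Qed.

Lemma Delta_differentiable_jacobian :
  differentiable (Delta K s) y /\ 'J (Delta K s) y = Delta_jacobian_mx.
Proof. exact/expansion_jacobian/Delta_expansion. Qed.

End Jacobian.

Theorem proposition9p2 (R : realType) (n : nat)
    (K : 'I_n.+1 -> R -> \bar R) (s : 'S_n) (y : 'rV[R]_n) :
  (forall j, torus_kernel (K j)) ->
  (forall j, C2_strictly_concave (K j)) ->
  in_simplex s y ->
  (forall k, (k <= n)%N ->
     exists z, Ileft s y k < z < Iright s y k /\
       Fsum K y z = msupE K s y k /\
       (forall t, Ileft s y k <= t <= Iright s y k ->
          Fsum K y t = msupE K s y k -> t = z)) ->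
  differentiable (Delta K s) y /\ 'J (Delta K s) y \in unitmx.
Proof.
move=> K_torus K_concave y_simplex maxima.
have /choice[z hz] : forall k, exists z, (k <= n)%N ->
    [/\ Ileft s y k < z < Iright s y k, Fsum K y z = msupE K s y k &
        forall t, Ileft s y k <= t <= Iright s y k -> Fsum K y t = msupE K s y k -> t = z].
  move=> k; case: (leqP k n) => [kn|]; last by exists 0.
  by have [zk [? [? ?]]] := maxima k kn; exists zk.
have z_arc k (kn : (k <= n)%N) : Ileft s y k < z k < Iright s y k by case: (hz k kn).
have z_max k (kn : (k <= n)%N) : Fsum K y (z k) = msupE K s y k by case: (hz k kn).
have [Delta_diff ->] := Delta_differentiable_jacobian K_torus K_concave y_simplex z_arc z_max
  (fun k kn => let: And3 _ _ z_unique := hz k kn in z_unique).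
by split; last exact: (Delta_jacobian_mx_unit K_concave y_simplex z_arc).
Qed.
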